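(* Let $q$ be a prime power, let $\lambda \in \mathbb{F}_{q^n}\setminus\mathbb{F}_q$, $t = [\mathbb{F}_q(\lambda):\mathbb{F}_q]$, let $\overline{S}$ be an $\mathbb{F}_{q^t}$-subspace of $\mathbb{F}_{q^n}$ of $\mathbb{F}_{q^t}$-dimension $l>0$, let $b\in\mathbb{F}_{q^n}^*$ with $b\mathbb{F}_{q^t}\cap\overline{S}=\{0\}$, let $0<m<t$, $k = tl+m$, and let $S = \overline{S} \oplus b\langle 1, \lambda, \ldots, \lambda^{m-1}\rangle_{\mathbb{F}_q}$ (a $k$-dimensional $\mathbb{F}_q$-subspace). If $\alpha \in \mathbb{F}_{q^n}^*$ satisfies $\dim_{\mathbb{F}_{q^t}}(\overline{S} \cap \alpha\overline{S}) = i$, then $\dim_{\mathbb{F}_q}(S \cap \alpha S) \leq 2m + ti$. *)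

From HB Require Import structures.
From mathcomp Require Import all_boot all_order all_algebra all_field.
Set Implicit Arguments. Unset Strict Implicit. Unset Printing Implicit Defensive.
Import GRing.Theory.
Local Open Scope ring_scope.

(* Setting: F = F_q a finite field, L = F_{q^n} a (finite-dimensional, hence
   finite) field extension of F. Subspaces are F-subspaces {vspace L};
   \dim is the F-dimension. *)

Definition Fadj (F : finFieldType) (L : fieldExtType F) (lam : L) : {vspace L} :=
  <<1%VS; lam>>%VS.

Definition is_subspace_over (F : finFieldType) (L : fieldExtType F)
  (K U : {vspace L}) : bool := (K * U <= U)%VS.

Definition scalev (F : finFieldType) (L : fieldExtType F) (a : L) (U : {vspace L})
  : {vspace L} := (<[a]> * U)%VS.

Definition powspan (F : finFieldType) (L : fieldExtType F) (lam : L) (m : nat)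
  : {vspace L} := span [seq (lam ^+ j)%R | j <- iota 0 m].

From HB Require Import structures.
From mathcomp Require Import all_boot all_order all_algebra all_field.
From mathcomp Require Import zify.
Set Implicit Arguments. Unset Strict Implicit. Unset Printing Implicit Defensive.
Import GRing.Theory.
Local Open Scope ring_scope.

(* Adding the part
   b<1, ..., lam^(m-1)>, of dimension at most m, to Sbar on both sides of
   Sbar :&: alpha Sbar therefore adds at most 2m to its dimension. *)

Section IntersectionOfSums.

Variables (K : fieldType) (vT : vectType K).
Implicit Types U V W : {vspace vT}.

Lemma dimv_cap_addl_le U V W :
  (\dim ((U + V) :&: W) <= \dim (U :&: W) + \dim V)%N.
Proof.
set X := ((U + V) :&: W)%VS.
have XUsub : (X + U <= U + V)%VS by rewrite subv_add capvSl addvSl.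
have XcapUsub : (X :&: U <= U :&: W)%VS.
  by rewrite subv_cap capvSr (subv_trans (capvSl _ _) (capvSr _ _)).
have := dimv_sum_cap X U; have := dimvS XUsub; have := dimvS XcapUsub.
have := dimv_sum_cap U V; lia.
Qed.

Lemma dimv_cap_add_le U1 V1 U2 V2 :
  (\dim ((U1 + V1) :&: (U2 + V2)) <= \dim (U1 :&: U2) + \dim V1 + \dim V2)%N.
Proof.
apply: leq_trans (dimv_cap_addl_le _ _ _) _; rewrite addnAC leq_add2r capvC.
by apply: leq_trans (dimv_cap_addl_le _ _ _) _; rewrite capvC.
Qed.

End IntersectionOfSums.

Section Scaling.

Variables (F : finFieldType) (L : fieldExtType F).

Lemma scalevDr (a : L) (U V : {vspace L}) :
  scalev a (U + V) = (scalev a U + scalev a V)%VS.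
Proof. exact: prodvDr. Qed.

Lemma dim_scalev (a : L) (U : {vspace L}) : a != 0 -> \dim (scalev a U) = \dim U.
Proof. by move=> a_neq0; rewrite /scalev prodvC dim_cosetv. Qed.

Lemma dim_powspan_le (lam : L) (m : nat) : (\dim (powspan lam m) <= m)%N.
Proof. by apply: leq_trans (dim_span _) _; rewrite size_map size_iota. Qed.

End Scaling.

Theorem lemma4p5 (F : finFieldType) (L : fieldExtType F) (lam : L)
  (Sbar : {vspace L}) (b alpha : L) (t l m i : nat) :
  lam \notin 1%VS ->
  t = \dim (Fadj lam) ->
  is_subspace_over (Fadj lam) Sbar ->
  \dim Sbar = (t * l)%N -> (0 < l)%N ->
  b != 0 ->
  (scalev b (Fadj lam) :&: Sbar)%VS = 0%VS ->
  (0 < m)%N -> (m < t)%N ->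
  alpha != 0 ->
  \dim (Sbar :&: scalev alpha Sbar)%VS = (t * i)%N ->
  let S := (Sbar + scalev b (powspan lam m))%VS in
  (\dim (S :&: scalev alpha S)%VS <= 2 * m + t * i)%N.
Proof.
move=> _ _ _ _ _ b_neq0 _ _ _ alpha_neq0 dim_Sbar_cap /=.
rewrite scalevDr; apply: leq_trans (dimv_cap_add_le _ _ _ _) _.
rewrite dim_Sbar_cap (dim_scalev _ alpha_neq0) (dim_scalev _ b_neq0).
by have := dim_powspan_le lam m; lia.
Qed.
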